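(* Let $G$ be a nontrivial cactus on $n$ vertices with $k$ cycles. Then \[R(G)\geq \frac{n-k-1}{2}+\sqrt k,\] with equality for a bouquet of cycles (a collection of $k$ cycles all sharing one common vertex and otherwise disjoint).
   Context: A cactus is a connected graph in which any two cycles share at most one vertex; it is nontrivial if it has no bridges (edges whose removal disconnects the graph). The Randi\'c index is $R(G)=\sum_{uv\in E(G)}\frac{1}{\sqrt{d_ud_v}}$, where $d_v$ is the degree of $v$. *)

From mathcomp Require Import all_boot all_order all_algebra.
Set Implicit Arguments. Unset Strict Implicit. Unset Printing Implicit Defensive.
Import Order.TTheory GRing.Theory Num.Theory.

Definition simple_graph (T : finType) (e : rel T) : Prop :=
  symmetric e /\ irreflexive e.

Definition connected_graph (T : finType) (e : rel T) : Prop :=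
  forall x y : T, connect e x y.

Definition del_edge (T : finType) (e : rel T) (u v : T) : rel T :=
  [rel x y | e x y && ([set x; y] != [set u; v])].

Definition is_bridge (T : finType) (e : rel T) (u v : T) : Prop :=
  e u v /\ ~ connected_graph (del_edge e u v).

Definition bridgeless (T : finType) (e : rel T) : Prop :=
  forall u v : T, ~ is_bridge e u v.

Definition cycle_edges (T : finType) (s : seq T) : {set {set T}} :=
  [set [set p.1; p.2] | p in zip s (rot 1 s)].

(* A cycle of the graph, represented by its edge set: the edges of a closed
   walk through at least 3 distinct vertices (a sequence s of distinct
   vertices, size s >= 3, consecutive ones adjacent and the last adjacent to
   the first).  Since the vertices are distinct, size s <= #|T|, so the
   existential can be taken over tuples of length < #|T|.+1, making it a
   boolean predicate. *)
Definition is_cycle (T : finType) (e : rel T) (C : {set {set T}}) : bool :=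
  [exists n : 'I_#|T|.+1, exists t : n.-tuple T,
     [&& uniq t, 2 < n, cycle e t & C == cycle_edges t]].

Definition cycle_vertices (T : finType) (C : {set {set T}}) : {set T} :=
  \bigcup_(E in C) E.

Definition num_cycles (T : finType) (e : rel T) : nat :=
  #|[set C : {set {set T}} | is_cycle e C]|.

Definition cactus (T : finType) (e : rel T) : Prop :=
  simple_graph e /\ connected_graph e /\
  forall C1 C2 : {set {set T}}, is_cycle e C1 -> is_cycle e C2 -> C1 != C2 ->
    #|cycle_vertices C1 :&: cycle_vertices C2| <= 1.

Definition nontrivial_cactus (T : finType) (e : rel T) : Prop :=
  cactus e /\ bridgeless e.

Local Open Scope ring_scope.

Definition degree (T : finType) (e : rel T) (v : T) : nat := #|[set w | e v w]|.

(* Randic index: sum over (unordered) edges uv of 1/sqrt(d_u d_v); each edge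
   is counted twice in the sum over ordered adjacent pairs, hence the 1/2. *)
Definition randic (R : rcfType) (T : finType) (e : rel T) : R :=
  (\sum_(p : T * T | e p.1 p.2)
      (Num.sqrt ((degree e p.1)%:R * (degree e p.2)%:R))^-1) / 2%:R.

Definition bouquet (T : finType) (e : rel T) : Prop :=
  simple_graph e /\
  exists (c : T) (F : {set {set {set T}}}),
    [/\ forall C, C \in F -> is_cycle e C /\ c \in cycle_vertices C,
        forall C1 C2, C1 \in F -> C2 \in F -> C1 != C2 ->
          cycle_vertices C1 :&: cycle_vertices C2 = [set c],
        forall x y, e x y <-> exists2 C, C \in F & [set x; y] \in C
      & forall v, v = c \/ exists2 C, C \in F & v \in cycle_vertices C].

From mathcomp Require Import all_boot all_order all_algebra.
From mathcomp Require Import zify ring lra.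
Set Implicit Arguments. Unset Strict Implicit. Unset Printing Implicit Defensive.

(* Put s_v = sqrt (d_v / 2).  The identity
     1 / sqrt (d_u d_v) = (1/s_u + 1/s_v - 1) / 2 + (1 - 1/s_u) (1 - 1/s_v) / 2
   writes R(G) as sum_v s_v - m/2 plus a sum over edges of products that are
   nonnegative as soon as all degrees are at least 2, which is the case in a
   bridgeless connected graph with at least two vertices.  A nonempty graph has at
   least m - n + 1 cycles, so with r_v = s_v - 1 >= 0 we get
   sum_v r_v^2 + 2 sum_v r_v = m - n <= k - 1, and together with
   sum_v r_v^2 <= (sum_v r_v)^2 this forces sum_v r_v^2 <= (sqrt k - 1)^2, which
   is the bound.  In a bouquet the petals are the only cycles, the centre has
   degree 2k and every other vertex degree 2; each edge has an endpoint with
   s_v = 1, so the product sum vanishes and R(G) is computed exactly. *)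

Section CycleEdges.
Variable T : finType.
Implicit Types (e : rel T) (t : seq T) (x y u v : T).

Lemma eq_set2E x y u v :
  ([set x; y] == [set u; v]) = ((x == u) && (y == v)) || ((x == v) && (y == u)).
Proof.
apply/eqP/idP => [E|]; last by case/orP => /andP[/eqP-> /eqP->] //; rewrite setUC.
have /set2P xuv : x \in [set u; v] by rewrite -E set21.
have /set2P yuv : y \in [set u; v] by rewrite -E set22.
have /set2P uxy : u \in [set x; y] by rewrite E set21.
have /set2P vxy : v \in [set x; y] by rewrite E set22.
by case: xuv yuv uxy vxy => -> [] -> [] ? [] ?; subst; rewrite !eqxx ?orbT.
Qed.

Lemma mem_cycle_vertices (C : {set {set T}}) x y :
  [set x; y] \in C -> x \in cycle_vertices C /\ y \in cycle_vertices C.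
Proof. by move=> xyC; split; apply/bigcupP; exists [set x; y]; rewrite ?set21 ?set22. Qed.

Lemma zip_rot1 t : uniq t -> zip t (rot 1 t) = [seq (x, next t x) | x <- t].
Proof.
case: t => [|x0 p] // U.
apply: (@eq_from_nth _ (x0, x0)); first by rewrite size_map size_zip size_rot minnn.
rewrite size_zip size_rot minnn => i lti.
rewrite nth_zip ?size_rot // (nth_map x0) // next_nth mem_nth // index_uniq //.
rewrite rot1_cons nth_rcons; congr pair.
move: lti => /=; rewrite ltnS leq_eqVlt => /orP[/eqP->|->] //.
by rewrite ltnn eqxx nth_default.
Qed.

Lemma cycle_edges_next t : uniq t -> cycle_edges t = [set [set x; next t x] | x in t].
Proof.
move=> U; apply/setP=> E; rewrite /cycle_edges zip_rot1 //.
apply/imsetP/imsetP => [[p /mapP[z zt ->] ->]|[z zt ->]]; first by exists z.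
by exists (z, next t z) => //; apply: map_f.
Qed.

Lemma mem_cycle_edges t x y : uniq t ->
  ([set x; y] \in cycle_edges t) = (x \in t) && ((y == next t x) || (y == prev t x)).
Proof.
move=> U; rewrite cycle_edges_next //; apply/imsetP/idP => [[z zt /eqP]|].
  rewrite eq_set2E => /orP[]/andP[/eqP-> /eqP->]; first by rewrite zt eqxx.
  by rewrite mem_next zt prev_next // eqxx orbT.
case/andP => xt /orP[]/eqP->; first by exists x.
by exists (prev t x); rewrite ?mem_prev // next_prev // setUC.
Qed.

Lemma next_neq_prev t x : uniq t -> 2 < size t -> x \in t -> next t x != prev t x.
Proof.
move=> U s3 xt.
rewrite -(next_rot (index x t) U) -(prev_rot (index x t) U).
have := rot_index xt; set q := (drop _ _ ++ _) => E.
have : uniq (x :: q) by rewrite -E rot_uniq.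
have : 2 < size (x :: q) by rewrite -E size_rot.
rewrite E next_nth prev_nth mem_head => sq /andP[xNq Uq].
have -> : index x (x :: q) = 0 by rewrite /= eqxx.
rewrite (memNindex xNq).
have -> : nth x (x :: q) (size q) = last x (x :: q) by rewrite -nth_last.
case: q {E} sq xNq Uq => [|y [|z r]] //= _ _ /andP[yNr _].
by apply: contra yNr => /eqP->; apply: mem_last.
Qed.

Lemma cycle_neighbours t x : uniq t -> x \in t ->
  [set y | [set x; y] \in cycle_edges t] = [set next t x; prev t x].
Proof. by move=> U xt; apply/setP=> y; rewrite !inE mem_cycle_edges // xt. Qed.

Lemma card_cycle_neighbours t x : uniq t -> 2 < size t ->
  #|[set y | [set x; y] \in cycle_edges t]| = (x \in t).*2.
Proof.
move=> U s3; have [xt|xNt] := boolP (x \in t).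
  by rewrite cycle_neighbours // cards2 next_neq_prev.
apply/eqP; rewrite cards_eq0; apply/eqP/setP=> y.
by rewrite !inE mem_cycle_edges // (negbTE xNt).
Qed.

Lemma cycle_vertices_edges t : uniq t ->
  cycle_vertices (cycle_edges t) = [set x | x \in t].
Proof.
move=> U; apply/setP=> x; rewrite inE; apply/bigcupP/idP => [[E]|xt].
  by rewrite cycle_edges_next // => /imsetP[z zt ->] /set2P[]->; rewrite ?mem_next.
by exists [set x; next t x]; rewrite ?set21 // cycle_edges_next //; apply: imset_f.
Qed.

Lemma cycle_edges_adj e t x y : uniq t -> cycle e t ->
  [set x; y] \in cycle_edges t -> e x y || e y x.
Proof.
move=> U et; rewrite mem_cycle_edges // => /andP[xt /orP[]/eqP->].
  by rewrite (next_cycle et xt).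
by rewrite (prev_cycle et xt) orbT.
Qed.

Lemma uniq_size_le_card (s : seq T) : uniq s -> size s <= #|T|.
Proof. by move/card_uniqP <-; apply: max_card. Qed.

Lemma is_cycleP e C :
  reflect (exists t, [/\ uniq t, 2 < size t, cycle e t & C = cycle_edges t])
          (is_cycle e C).
Proof.
apply: (iffP existsP) => [[n /existsP[t /and4P[U s3 et /eqP->]]]|[t [U s3 et ->]]].
  by exists t; rewrite size_tuple.
have st : size t < #|T|.+1 by rewrite ltnS uniq_size_le_card.
exists (Ordinal st); apply/existsP; exists (in_tuple t).
by rewrite /= U s3 et eqxx.
Qed.

Lemma fpath_last_closed (f : T -> T) (S : pred T) x p :
  (forall y, S y -> S (f y)) -> S x -> fpath f x p -> S (last x p).
Proof.
move=> clS; elim: p x => [|z p IHp] x //= Sx /andP[/eqP <- fp].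
by apply: IHp fp; apply: clS.
Qed.

Lemma cycle_neighbours_sub t t' x : uniq t -> uniq t' -> 2 < size t' ->
  cycle_edges t' \subset cycle_edges t -> x \in t' ->
  x \in t /\ [set next t' x; prev t' x] = [set next t x; prev t x].
Proof.
move=> U U' s3 /subsetP sub xt'.
have edge_t y : [set x; y] \in cycle_edges t' -> (x \in t) && (y \in [set next t x; prev t x]).
  by move/sub; rewrite mem_cycle_edges // in_set2.
have /edge_t/andP[xt nxt] : [set x; next t' x] \in cycle_edges t'.
  by rewrite mem_cycle_edges // xt' eqxx.
have /edge_t/andP[_ pxt] : [set x; prev t' x] \in cycle_edges t'.
  by rewrite mem_cycle_edges // xt' eqxx orbT.
split=> //; apply/eqP; rewrite eqEcard subUset !sub1set nxt pxt /=.
by rewrite (cards2 (next t' x)) next_neq_prev // cards2 ltnS leq_b1.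
Qed.

Lemma cycle_edges_subset_eq t t' : uniq t -> uniq t' -> 2 < size t' ->
  cycle_edges t' \subset cycle_edges t -> cycle_edges t' = cycle_edges t.
Proof.
move=> U U' s3 sub; have nb := cycle_neighbours_sub U U' s3 sub.
have next_t' x : x \in t' -> next t x \in t'.
  move=> xt'; have [_ /setP/(_ (next t x))] := nb x xt'.
  by rewrite !inE eqxx /= => /orP[]/eqP->; rewrite ?mem_next ?mem_prev.
have t_t' : {subset t <= t'}.
  case: t' U' s3 sub nb next_t' => [|x0 q] // _ _ _ nb next_t' z zt.
  have x0t : x0 \in t by have [] := nb x0 (mem_head x0 q).
  have /connectP[p tp ->] : fconnect (next t) x0 z.
    by rewrite (fconnect_cycle (cycle_next U) x0t) zt.
  exact: fpath_last_closed next_t' (mem_head x0 q) tp.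
apply/eqP; rewrite eqEsubset sub; apply/subsetP => E.
rewrite cycle_edges_next // => /imsetP[x xt ->].
have [_ Ex] := nb x (t_t' x xt).
have : next t x \in [set next t' x; prev t' x] by rewrite Ex set21.
by rewrite mem_cycle_edges // t_t' // in_set2.
Qed.

End CycleEdges.

Section Cyclomatic.
Variable T : finType.
Implicit Types (f g : rel T) (S : {set T}) (x y u v : T).

Definition pairwise_disconnected f S :=
  [forall x in S, forall y in S, (x != y) ==> ~~ connect f x y].

(* For symmetric [f], the number of connected components. *)
Definition ncomp f := \max_(S | pairwise_disconnected f S) #|S|.

Definition narcs f := #|[set p : T * T | f p.1 p.2]|.

Lemma pairwise_disconnectedP f S :
  reflect {in S &, forall x y, x != y -> ~~ connect f x y}
          (pairwise_disconnected f S).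
Proof.
apply: (iffP forall_inP) => [H x y xS yS|H x xS].
  by move: (H x xS) => /forall_inP/(_ y yS)/implyP.
by apply/forall_inP => y yS; apply/implyP; apply: H.
Qed.

Lemma ncompP f : exists2 S, pairwise_disconnected f S & ncomp f = #|S|.
Proof.
have D0 : pairwise_disconnected f set0 by apply/pairwise_disconnectedP => x y; rewrite inE.
rewrite /ncomp (bigmax_eq_arg set0) //.
by case: arg_maxnP => // S DS _; exists S.
Qed.

Lemma leq_ncomp f S : pairwise_disconnected f S -> #|S| <= ncomp f.
Proof. exact: leq_bigmax_cond. Qed.

Lemma ncomp_gt0 f x : 0 < ncomp f.
Proof.
apply: leq_trans (leq_ncomp (_ : pairwise_disconnected f [set x])); first by rewrite cards1.
by apply/pairwise_disconnectedP => a b /set1P-> /set1P->; rewrite eqxx.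
Qed.

Lemma pairwise_disconnectedU1 f S x : symmetric f -> pairwise_disconnected f S ->
  {in S, forall z, ~~ connect f z x} ->
  pairwise_disconnected f (x |: S) /\ #|x |: S| = #|S|.+1.
Proof.
move=> sf /pairwise_disconnectedP DS Nx.
have xNS : x \notin S by apply/negP => /Nx; rewrite connect0.
split; last by rewrite cardsU1 xNS.
apply/pairwise_disconnectedP => a b; rewrite !inE.
case/orP=> [/eqP->|aS] /orP[/eqP->|bS]; rewrite ?eqxx //.
- by rewrite (sym_connect_sym sf) Nx.
- by rewrite Nx.
- exact: DS.
Qed.

Lemma leq_ncomp_subrel f g : subrel g f -> ncomp f <= ncomp g.
Proof.
move=> gf; have [S DS ->] := ncompP f; apply: leq_ncomp.
apply/pairwise_disconnectedP => x y xS yS nxy.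
move/pairwise_disconnectedP: DS => /(_ x y xS yS nxy); apply: contra.
by apply: connect_sub => a b /gf /connect1.
Qed.

Lemma del_edge_sym f u v : symmetric f -> symmetric (del_edge f u v).
Proof. by move=> sf x y; rewrite /del_edge /= sf setUC. Qed.

Lemma del_edge_irr f u v : irreflexive f -> irreflexive (del_edge f u v).
Proof. by move=> irf x; rewrite /del_edge /= irf. Qed.

Lemma del_edge_sub f u v : subrel (del_edge f u v) f.
Proof. by move=> x y /andP[]. Qed.

Lemma narcs_del_edge f u v : symmetric f -> irreflexive f -> f u v ->
  narcs f = (narcs (del_edge f u v)).+2.
Proof.
move=> sf irf fuv; have nuv : u != v by apply: contraTneq fuv => ->; rewrite irf.
rewrite /narcs; have -> : [set p : T * T | del_edge f u v p.1 p.2] =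
                          [set p : T * T | f p.1 p.2] :\ (u, v) :\ (v, u).
  apply/setP => [[x y]]; rewrite !inE /= !xpair_eqE /del_edge /= eq_set2E.
  by case: (x == u); case: (y == v); case: (x == v); case: (y == u); case: (f x y).
rewrite (cardsD1 (u, v)) (cardsD1 (v, u) (_ :\ (u, v))) !inE /= fuv sf fuv.
by rewrite xpair_eqE eq_sym (negbTE nuv).
Qed.

Lemma is_cycle_subrel f g C : subrel g f -> is_cycle g C -> is_cycle f C.
Proof.
move=> gf /is_cycleP[t [U s3 gt ->]]; apply/is_cycleP; exists t; split => //.
exact: sub_cycle gt.
Qed.

Lemma del_edge_cycle f u v : symmetric f -> irreflexive f -> f u v ->
  connect (del_edge f u v) v u ->
  exists2 C, is_cycle f C & ~~ is_cycle (del_edge f u v) C.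
Proof.
move=> sf irf fuv /connectP[p0 p0_path p0_last].
case: (shortenP p0_path) p0_last => p p_path Up _ p_last {p0 p0_path}.
have nuv : u != v by apply: contraTneq fuv => ->; rewrite irf.
have s3 : 2 < size (v :: p).
  case: p p_path Up p_last => [|w [|w' r]] //=; first by move=> _ _ uv; rewrite uv eqxx in nuv.
  by rewrite andbT /del_edge /= => /andP[_ +] _ wu; rewrite -wu setUC eqxx.
have fp : cycle f (v :: p).
  by rewrite /= rcons_path -p_last fuv andbT; apply: sub_path p_path; apply: del_edge_sub.
have uv_p : [set u; v] \in cycle_edges (v :: p).
  apply/imsetP; exists (u, v) => //.
  by rewrite rot1_cons lastI -p_last zip_rcons ?size_belast // mem_rcons mem_head.
exists (cycle_edges (v :: p)); first by apply/is_cycleP; exists (v :: p).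
apply/negP => /is_cycleP[t [U _ gt E]]; rewrite E in uv_p.
by move: (cycle_edges_adj U gt uv_p); rewrite /del_edge /= setUC eqxx !andbF.
Qed.

Lemma ncomp_del_bridge f u v : symmetric f -> f u v ->
  ~~ connect (del_edge f u v) v u -> ncomp f < ncomp (del_edge f u v).
Proof.
move=> sf fuv Ncvu; set g := del_edge f u v.
have sg : symmetric g by apply: del_edge_sym.
have cf := sym_connect_sym sf; have cg := sym_connect_sym sg.
have gf x y : connect g x y -> connect f x y.
  by apply: connect_sub => a b /del_edge_sub /connect1.
have [S DS ES] := ncompP f.
have [w wS cwu] : exists2 w, w \in S & connect f w u.
  have [/exists_inP //|/exists_inPn Nu] := boolP [exists z in S, connect f z u].
  have [DS1 c1] := pairwise_disconnectedU1 sf DS Nu.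
  by have := leq_ncomp DS1; rewrite c1 ES ltnn.
have [x [cwx Ncwx]] : exists x, connect f w x /\ ~~ connect g w x.
  have [cwv|] := boolP (connect g w v); last first.
    by exists v; split => //; apply: connect_trans cwu (connect1 fuv).
  exists u; split => //; apply/negP => cwu'.
  by move: Ncvu; rewrite (connect_trans _ cwu') // cg.
have DSg : pairwise_disconnected g S.
  apply/pairwise_disconnectedP => a b aS bS nab.
  by move/pairwise_disconnectedP: DS => /(_ a b aS bS nab); apply: contra; apply: gf.
have Nx : {in S, forall z, ~~ connect g z x}.
  move=> z zS; have [->//|nzw] := eqVneq z w; apply/negP => /gf czx.
  move/pairwise_disconnectedP: DS => /(_ z w zS wS nzw)/negP; apply.
  by apply: connect_trans czx _; rewrite cf.
have [DS1 c1] := pairwise_disconnectedU1 sg DSg Nx.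
by have := leq_ncomp DS1; rewrite c1 ES.
Qed.

(* Deleting an edge either destroys a cycle or increases [ncomp]. *)
Lemma cyclomatic_bound f : symmetric f -> irreflexive f ->
  narcs f + (ncomp f).*2 <= (num_cycles f).*2 + #|T|.*2.
Proof.
have [m] := ubnP (narcs f); elim: m f => // m IHm f ltm sf irf.
case: (pickP (fun p : T * T => f p.1 p.2)) => [[u v] /= fuv|Nf]; last first.
  have -> : narcs f = 0.
    by apply/eqP; rewrite cards_eq0; apply/eqP/setP => p; rewrite !inE Nf.
  rewrite add0n; apply: leq_trans (leq_addl _ _); rewrite leq_double.
  by apply/bigmax_leqP => S _; apply: max_card.
set g := del_edge f u v.
have Eg : narcs f = (narcs g).+2 := narcs_del_edge sf irf fuv.
have ltg : narcs g < m by move: ltm; rewrite Eg; lia.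
have IHg := IHm g ltg (del_edge_sym u v sf) (del_edge_irr u v irf).
have cyc_sub : [set C | is_cycle g C] \subset [set C | is_cycle f C].
  by apply/subsetP => C; rewrite !inE; apply: is_cycle_subrel; apply: del_edge_sub.
have cyc_le : num_cycles g <= num_cycles f by apply: subset_leq_card.
have [cvu|Ncvu] := boolP (connect g v u).
  have [C Cf Cg] := del_edge_cycle sf irf fuv cvu.
  have cyc_lt : num_cycles g < num_cycles f.
    by apply: proper_card; apply/properP; split => //; exists C; rewrite inE.
  have := leq_ncomp_subrel (@del_edge_sub f u v); rewrite -/g.
  by move: IHg cyc_lt; rewrite Eg -!muln2; lia.
have := ncomp_del_bridge sf fuv Ncvu; rewrite -/g.
by move: IHg cyc_le; rewrite Eg -!muln2; lia.
Qed.

End Cyclomatic.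

Section Degrees.
Variable T : finType.
Implicit Types (e : rel T).

Lemma narcs_sum_degree e : narcs e = \sum_a degree e a.
Proof.
rewrite /narcs -sum1_card (eq_bigl (fun p : T * T => e p.1 p.2)); last by move=> p; rewrite inE.
rewrite -(pair_big_dep xpredT e (fun _ _ => 1)) /=.
by apply: eq_bigr => a _; rewrite /degree -sum1_card; apply: eq_bigl => b; rewrite inE.
Qed.

Lemma degree_gt1 e a : simple_graph e -> connected_graph e -> bridgeless e ->
  1 < #|T| -> 1 < degree e a.
Proof.
move=> [se ie] ce br /card_gt1P[x [y [_ _ nxy]]].
have [w nwa] : exists w, w != a.
  by case: (eqVneq x a) => [xa|]; [exists y; rewrite -xa eq_sym | exists x].
have /connectP[[|b p] /= ap wl] := ce a w; first by rewrite wl eqxx in nwa.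
have eab : e a b by case/andP: ap.
rewrite ltnNge; apply/negP => /card_le1_eqP only_b.
apply: (br a b); split=> // /(_ a w) /connectP[[|z q] /= aq wl'].
  by rewrite wl' eqxx in nwa.
by move: aq => /andP[/andP[eaz]]; rewrite (only_b z b) ?inE // eqxx.
Qed.

Lemma num_cycles_card_le2 e : #|T| <= 2 -> num_cycles e = 0.
Proof.
move=> T2; apply/eqP; rewrite cards_eq0; apply/eqP/setP => C; rewrite !inE.
apply/negbTE/negP => /is_cycleP[t [U s3 _ _]].
by have := leq_trans s3 (uniq_size_le_card U); rewrite ltnNge T2.
Qed.

End Degrees.


Section Bouquet.
Variables (T : finType) (e : rel T) (c : T) (F : {set {set {set T}}}).
Hypotheses (se : symmetric e) (ie : irreflexive e).
Hypothesis petal_cycle : forall C, C \in F -> is_cycle e C /\ c \in cycle_vertices C.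
Hypothesis petals_meet : forall C1 C2, C1 \in F -> C2 \in F -> C1 != C2 ->
  cycle_vertices C1 :&: cycle_vertices C2 = [set c].
Hypothesis petal_edges : forall x y, e x y <-> exists2 C, C \in F & [set x; y] \in C.
Hypothesis petals_cover : forall v, v = c \/ exists2 C, C \in F & v \in cycle_vertices C.

Lemma petal_uniq C1 C2 y : C1 \in F -> C2 \in F ->
  y \in cycle_vertices C1 -> y \in cycle_vertices C2 -> y != c -> C1 = C2.
Proof.
move=> F1 F2 y1 y2 yNc; apply/eqP/negPn/negP => /(petals_meet F1 F2)/setP/(_ y).
by rewrite !inE y1 y2 (negbTE yNc).
Qed.

Lemma petal_uniq_edge C1 C2 x y : C1 \in F -> C2 \in F -> e x y ->
  x \in cycle_vertices C1 -> y \in cycle_vertices C1 ->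
  x \in cycle_vertices C2 -> y \in cycle_vertices C2 -> C1 = C2.
Proof.
move=> F1 F2 exy x1 y1 x2 y2; have [xc|xNc] := eqVneq x c; last exact: petal_uniq x1 x2 _.
by apply: petal_uniq F1 F2 y1 y2 _; apply: contraTneq exy => ->; rewrite xc ie.
Qed.

Lemma edge_petal_uniq C1 C2 x y : C1 \in F -> C2 \in F ->
  [set x; y] \in C1 -> [set x; y] \in C2 -> C1 = C2.
Proof.
move=> F1 F2 xy1 xy2; have exy : e x y by apply/petal_edges; exists C1.
have [x1 y1] := mem_cycle_vertices xy1; have [x2 y2] := mem_cycle_vertices xy2.
exact: petal_uniq_edge exy x1 y1 x2 y2.
Qed.

Lemma edge_in_petal C x y : C \in F -> e x y ->
  x \in cycle_vertices C -> y \in cycle_vertices C -> [set x; y] \in C.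
Proof.
move=> FC exy xC yC; have [C2 F2 xy2] := (petal_edges x y).1 exy.
have [x2 y2] := mem_cycle_vertices xy2.
by rewrite (petal_uniq_edge FC F2 exy xC yC x2 y2).
Qed.

Lemma petal_step C x y : C \in F -> x != c -> x \in cycle_vertices C -> e x y ->
  y \in cycle_vertices C.
Proof.
move=> FC xNc xC /petal_edges[C2 F2 /mem_cycle_vertices[x2 y2]].
by rewrite (petal_uniq FC F2 xC x2 xNc).
Qed.

Lemma petal_path C x p : C \in F -> x != c -> x \in cycle_vertices C ->
  path e x p -> c \notin p -> {subset p <= cycle_vertices C}.
Proof.
move=> FC; elim: p x => [|y p IHp] x xNc xC //= /andP[exy yp].
rewrite inE negb_or eq_sym => /andP[yNc cNp] z /predU1P[->|zp].
  exact: petal_step exy.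
exact: IHp (petal_step FC xNc xC exy) yp cNp _ zp.
Qed.

(* Rotating [c] to the front, the rest of the cycle is a path avoiding [c]. *)
Lemma cycle_in_petal t : uniq t -> 2 < size t -> cycle e t ->
  exists2 C, C \in F & {subset t <= cycle_vertices C}.
Proof.
move=> U s3 et.
have [i [x [p [Et cNp]]]] : exists i x p, rot i t = x :: p /\ c \notin p.
  have [ct|] := boolP (c \in t).
    move: (U); rewrite -(rot_uniq (index c t)) rot_index // => /andP[cNp _].
    by exists (index c t), c, (drop (index c t).+1 t ++ take (index c t) t); rewrite rot_index.
  case: t {U et} s3 => [|x p] // _; rewrite inE negb_or => /andP[_ cNp].
  by exists 0, x, p; rewrite rot0.
have : cycle e (x :: p) by rewrite -Et rot_cycle.
have : 2 < size (x :: p) by rewrite -Et size_rot.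
case: p Et cNp => [|y p] // Et; rewrite inE negb_or eq_sym => /andP[yNc cNp] _.
rewrite /= rcons_path => /and3P[exy yp _].
have [yc|[C FC yC]] := petals_cover y; first by rewrite yc eqxx in yNc.
exists C => // z; rewrite -(mem_rot i) Et !inE => /predU1P[->|/predU1P[->//|zp]].
  by apply: petal_step yC _; rewrite // se.
exact: petal_path yp cNp _ zp.
Qed.

Lemma is_cycle_bouquet C' : is_cycle e C' -> C' \in F.
Proof.
case/is_cycleP => t' [U' s3' et' ->].
have [C FC sub] := cycle_in_petal U' s3' et'.
have [/is_cycleP[t [U _ _ Ct]] _] := petal_cycle FC.
suff -> : cycle_edges t' = C by [].
rewrite Ct; apply: cycle_edges_subset_eq => //; apply/subsetP => E.
rewrite cycle_edges_next // => /imsetP[x xt' ->]; rewrite -Ct.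
by apply: edge_in_petal; rewrite ?sub ?mem_next // (next_cycle et').
Qed.

Lemma num_cycles_bouquet : num_cycles e = #|F|.
Proof.
apply: eq_card => C; rewrite inE.
by apply/idP/idP => [/is_cycle_bouquet|/petal_cycle[]].
Qed.

Lemma edge_petal_count x y :
  (e x y : nat) = \sum_(C in F) ([set x; y] \in C : nat).
Proof.
have [exy|Nexy] := boolP (e x y); last first.
  rewrite big1 // => C FC; apply/eqP; rewrite eqb0.
  by apply: contra Nexy => xyC; apply/petal_edges; exists C.
have [C0 F0 xy0] := (petal_edges x y).1 exy.
rewrite (bigD1 C0) //= xy0 big1 // => C /andP[FC nC0]; apply/eqP; rewrite eqb0.
by apply: contra nC0 => xyC; rewrite (edge_petal_uniq FC F0 xyC xy0).
Qed.

Lemma degree_bouquet v : degree e v = (#|[set C in F | v \in cycle_vertices C]|).*2.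
Proof.
rewrite /degree -!sum1dep_card big_mkcond big_mkcondr /=.
rewrite (eq_bigr _ (fun w _ => edge_petal_count v w)) exchange_big /= -muln2 big_distrl.
apply: eq_bigr => C FC /=; have [/is_cycleP[t [U s3 _ ->]] _] := petal_cycle FC.
rewrite cycle_vertices_edges // inE muln2 -card_cycle_neighbours // -sum1dep_card.
by rewrite [RHS]big_mkcond.
Qed.

Lemma degree_bouquet_centre : degree e c = #|F|.*2.
Proof.
rewrite degree_bouquet; congr _.*2; apply: eq_card => C; rewrite inE.
by case FC: (C \in F) => //; case: (petal_cycle FC).
Qed.

Lemma degree_bouquet_petal v : v != c -> degree e v = 2.
Proof.
move=> vNc; rewrite degree_bouquet; case: (petals_cover v) => [vc|[C0 F0 v0]].
  by rewrite vc eqxx in vNc.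
rewrite -[2]/(1.*2) -(cards1 C0); congr _.*2; apply: eq_card => C; rewrite !inE.
by apply/andP/eqP => [[FC vC]|->] //; apply: petal_uniq FC F0 vC v0 vNc.
Qed.

Lemma card_bouquet0 : F = set0 -> #|T| = 1.
Proof.
move=> F0; have all_c v : v = c by case: (petals_cover v) => [//|[C]]; rewrite F0 inE.
apply/eqP; rewrite eqn_leq; apply/andP; split; last by apply/card_gt0P; exists c.
by apply/card_le1_eqP => x y _ _; rewrite (all_c x) (all_c y).
Qed.

End Bouquet.

Import Order.TTheory GRing.Theory Num.Theory.
Local Open Scope ring_scope.

Section Randic.
Variables (R : rcfType) (T : finType).
Implicit Types (e : rel T).

Definition sdeg e (a : T) : R := Num.sqrt ((degree e a)%:R / 2).

Lemma inv_sqrtrM_split (x y : R) : 0 < x -> 0 < y ->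
  (Num.sqrt (x * y))^-1 =
  (((Num.sqrt (x / 2))^-1 + (Num.sqrt (y / 2))^-1 - 1) +
   (1 - (Num.sqrt (x / 2))^-1) * (1 - (Num.sqrt (y / 2))^-1)) / 2.
Proof.
move=> x0 y0; have -> : x * y = 2 ^+ 2 * ((x / 2) * (y / 2)) by field.
rewrite (sqrtrM ((x / 2) * (y / 2))) ?exprn_ge0 // sqrtr_sqr ger0_norm //.
rewrite (sqrtrM (y / 2)) ?divr_ge0 ?ltW //.
have a0 : 0 < Num.sqrt (x / 2) by rewrite sqrtr_gt0 divr_gt0.
have b0 : 0 < Num.sqrt (y / 2) by rewrite sqrtr_gt0 divr_gt0.
by move: a0 b0; set a := Num.sqrt _; set b := Num.sqrt _ => a0 b0; field; rewrite ?gt_eqF.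
Qed.

Lemma sum_arcs_fst e (G : T -> R) :
  \sum_(p : T * T | e p.1 p.2) G p.1 = \sum_a (degree e a)%:R * G a.
Proof.
rewrite -(pair_big_dep xpredT e (fun a _ => G a)) /=; apply: eq_bigr => a _.
rewrite (eq_bigl (fun b => b \in [set w | e a w])); last by move=> b; rewrite inE.
by rewrite sumr_const mulr_natl.
Qed.

Lemma sum_arcs_snd e (G : T -> R) : symmetric e ->
  \sum_(p : T * T | e p.1 p.2) G p.2 = \sum_(p : T * T | e p.1 p.2) G p.1.
Proof.
move=> se; have swapK : involutive (fun p : T * T => (p.2, p.1)) by case.
by rewrite (reindex_inj (inv_inj swapK)) /=; apply: eq_bigl => p; rewrite se.
Qed.

Lemma sum_arcs_inv_sdeg e : symmetric e -> (forall a, (0 < degree e a)%N) ->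
  \sum_(p : T * T | e p.1 p.2) ((sdeg e p.1)^-1 + (sdeg e p.2)^-1 - 1) =
  4 * \sum_a sdeg e a - \sum_a (degree e a)%:R.
Proof.
move=> se dpos; rewrite sumrB big_split /= (sum_arcs_snd (fun a => (sdeg e a)^-1)) //.
rewrite (sum_arcs_fst e (fun a => (sdeg e a)^-1)) (sum_arcs_fst e (fun _ => 1)).
under [X in _ - X]eq_bigr => a _ do rewrite mulr1.
congr (_ - _); rewrite -big_split /= mulr_sumr; apply: eq_bigr => a _.
have s0 : 0 < sdeg e a by rewrite sqrtr_gt0 divr_gt0 ?ltr0n.
have -> : (degree e a)%:R = 2 * sdeg e a ^+ 2 :> R.
  by rewrite sqr_sqrtr ?divr_ge0 ?ler0n //; field.
by field; rewrite gt_eqF.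
Qed.

Lemma randic_decomposition e : symmetric e -> (forall a, (0 < degree e a)%N) ->
  randic R e = \sum_a sdeg e a - (\sum_a (degree e a)%:R) / 4 +
    (\sum_(p : T * T | e p.1 p.2) (1 - (sdeg e p.1)^-1) * (1 - (sdeg e p.2)^-1)) / 4.
Proof.
move=> se dpos; rewrite /randic.
under eq_bigr => p _ do rewrite inv_sqrtrM_split ?ltr0n //.
by rewrite -mulr_suml big_split /= sum_arcs_inv_sdeg //; field.
Qed.

End Randic.

Lemma sum_sqr_le_sqr_sum (R : realDomainType) (I : finType) (r : I -> R) :
  (forall i, 0 <= r i) -> \sum_i r i ^+ 2 <= (\sum_i r i) ^+ 2.
Proof.
move=> r0; pose P (q p : R) := (0 <= p) && (q <= p ^+ 2).
suff /andP[] : P (\sum_i r i ^+ 2) (\sum_i r i) by [].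
apply: (big_rec2 P); first by rewrite /P lexx sqr_ge0.
move=> i q p _ /andP[p0 qp]; have := r0 i; rewrite /P; set x := r i => x0.
by apply/andP; split; nra.
Qed.

Definition randic_cactus_bound (R : rcfType) (n k : nat) : R :=
  (n%:R - k%:R - 1) / 2%:R + Num.sqrt k%:R.

Section LowerBound.
Variables (R : rcfType) (T : finType).
Implicit Types (e : rel T).

Lemma randic_card_le1 e : irreflexive e -> (#|T| <= 1)%N -> randic R e = 0.
Proof.
move=> ie /card_le1_eqP T1; rewrite /randic big_pred0 ?mul0r // => [[x y]] /=.
by rewrite (T1 x y) ?inE // ie.
Qed.

Lemma randic_ge_of_degrees e : symmetric e -> (forall a, (1 < degree e a)%N) ->
  (\sum_a degree e a + 2 <= (num_cycles e + #|T|).*2)%N ->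
  randic_cactus_bound R #|T| (num_cycles e) <= randic R e.
Proof.
move=> se dgt1 sum_deg.
have dpos a : (0 < degree e a)%N by apply: ltnW.
rewrite randic_decomposition // /randic_cactus_bound.
set n := #|T|; set k := num_cycles e; set sk := Num.sqrt k%:R.
set D := \sum_a _; set A := \sum_a sdeg R e a.
set N := \sum_(p | _) _.
have s_ge1 a : 1 <= sdeg R e a.
  by rewrite -sqrtr1 ler_wsqrtr // ler_pdivlMr // mul1r (ler_nat R 2).
have N0 : 0 <= N.
  apply: sumr_ge0 => p _; apply: mulr_ge0; rewrite subr_ge0 invf_le1 //;
  exact: lt_le_trans ltr01 (s_ge1 _).
have HD : D + 2 <= 2 * k%:R + 2 * n%:R.
  rewrite /D -natr_sum -[2]/(2%:R) -!natrM -!natrD ler_nat.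
  by move: sum_deg; rewrite -!muln2; lia.
set S := \sum_a (sdeg R e a - 1); set Q := \sum_a (sdeg R e a - 1) ^+ 2.
have QS : Q <= S ^+ 2 by apply: sum_sqr_le_sqr_sum => a; rewrite subr_ge0.
have S0 : 0 <= S by apply: sumr_ge0 => a _; rewrite subr_ge0.
have ES : S = A - n%:R by rewrite /S sumrB sumr_const.
have EQ : Q = D / 2 - 2 * A + n%:R.
  rewrite /Q /A /D mulr_sumr mulr_suml -[n%:R](sumr_const T (1 : R)).
  rewrite -sumrB -big_split; apply: eq_bigr => a _ /=.
  rewrite sqrrB1 sqr_sqrtr ?divr_ge0 ?ler0n //; ring.
have sk0 : 0 <= sk := sqrtr_ge0 _.
have skk : sk ^+ 2 = k%:R by rewrite sqr_sqrtr // ler0n.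
(* Q + 2 S = m - n <= k - 1 bounds Q when S is large, Q <= S^2 when S is small. *)
have Q_le : Q <= (sk - 1) ^+ 2.
  have [S_ge|S_lt] := lerP (sk - 1) S; first by nra.
  by apply: le_trans QS _; nra.
lra.
Qed.

Lemma randic_ge_min_degree2 e : simple_graph e -> (forall a, (1 < degree e a)%N) ->
  randic_cactus_bound R #|T| (num_cycles e) <= randic R e.
Proof.
move=> [se ie] dgt1; case: (pickP (@predT T)) => [x _|T0].
  apply: randic_ge_of_degrees => //.
  have := cyclomatic_bound se ie; have := ncomp_gt0 e x.
  by rewrite narcs_sum_degree -!muln2; lia.
have T_0 : #|T| = 0%N by apply: eq_card0.
rewrite randic_card_le1 ?T_0 // num_cycles_card_le2 ?T_0 // /randic_cactus_bound sqrtr0.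
lra.
Qed.

Lemma randic_nontrivial_cactus_ge e : nontrivial_cactus e ->
  randic_cactus_bound R #|T| (num_cycles e) <= randic R e.
Proof.
move=> [[ge [ce _]] br]; have [T1|T2] := leqP #|T| 1.
  rewrite randic_card_le1 ?num_cycles_card_le2 ?(leq_trans T1) //; last by case: ge.
  have : (#|T|%:R : R) <= 1 by rewrite (ler_nat R _ 1).
  by rewrite /randic_cactus_bound sqrtr0; lra.
by apply: randic_ge_min_degree2 => // a; apply: degree_gt1.
Qed.

End LowerBound.

Lemma randic_bouquet (R : rcfType) (T : finType) (e : rel T) : bouquet e ->
  randic R e = randic_cactus_bound R #|T| (num_cycles e).
Proof.
case=> [[se ie] [c [F [petal_cycle petals_meet petal_edges petals_cover]]]].
rewrite (num_cycles_bouquet se ie petal_cycle petals_meet petal_edges petals_cover).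
have degree_c := degree_bouquet_centre ie petal_cycle petals_meet petal_edges.
have degree_v := degree_bouquet_petal ie petal_cycle petals_meet petal_edges petals_cover.
rewrite /randic_cactus_bound; set k := #|F| in degree_c *.
have [k0|kpos] := posnP k.
  have F0 : F = set0 by apply/eqP; rewrite -cards_eq0 -/k k0.
  have T1 := card_bouquet0 petals_cover F0.
  by rewrite randic_card_le1 ?T1 // k0 sqrtr0; lra.
have dpos a : (0 < degree e a)%N.
  by have [->|/degree_v->] := eqVneq a c; rewrite ?degree_c ?double_gt0.
have sdeg_v v : v != c -> sdeg R e v = 1.
  by move=> vNc; rewrite /sdeg degree_v // divff ?sqrtr1 // pnatr_eq0.
have sdeg_c : sdeg R e c = Num.sqrt k%:R.
  by rewrite /sdeg degree_c -muln2 natrM mulfK // pnatr_eq0.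
rewrite randic_decomposition //.
have -> : \sum_(p : T * T | e p.1 p.2) (1 - (sdeg R e p.1)^-1) * (1 - (sdeg R e p.2)^-1) = 0.
  apply: big1 => [[x y]] /= exy.
  have [xc|xNc] := eqVneq x c; last by rewrite sdeg_v // invr1 subrr mul0r.
  have [yc|yNc] := eqVneq y c; last by rewrite (sdeg_v y) // invr1 subrr mulr0.
  by rewrite xc yc ie in exy.
rewrite (bigD1 c) //= sdeg_c [X in X / 4](bigD1 c) //= degree_c.
rewrite (eq_bigr (fun _ => 1) sdeg_v).
rewrite (eq_bigr (fun _ => 2%:R) (fun v vNc => congr1 _ (degree_v v vNc))).
have -> : #|T|%:R = 1 + \sum_(a | a != c) (1 : R) by rewrite -(sumr_const T 1) (bigD1 c).
have -> : \sum_(a | a != c) 2%:R = 2 * \sum_(a | a != c) (1 : R).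
  by rewrite mulr_sumr; apply: eq_bigr => a _; rewrite mulr1.
by rewrite -muln2 natrM; lra.
Qed.

Theorem corollary4p4 (R : rcfType) :
  (forall (T : finType) (e : rel T), nontrivial_cactus e ->
     ((#|T|%:R - (num_cycles e)%:R - 1) / 2%:R + Num.sqrt (num_cycles e)%:R
        <= randic R e)) /\
  (forall (T : finType) (e : rel T), bouquet e ->
     randic R e =
       (#|T|%:R - (num_cycles e)%:R - 1) / 2%:R + Num.sqrt (num_cycles e)%:R).
Proof.
split=> T e; [exact: randic_nontrivial_cactus_ge | exact: randic_bouquet].
Qed.
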